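(* $\mathrm{Log}_{>1}(\mathbb{Q})\subsetneq \mathrm{Log}_{>1}(\mathbb{R})$; that is, $\mathrm{Log}_{>1}(\mathbb{Q})$ is strictly contained in $\mathrm{Log}_{>1}(\mathbb{R})$.
   Context: Modal formulas are built from a countable set of propositional variables using $\bot$, $\to$ and one unary modality $\lozenge$. A frame is a pair $(X,R)$; a valuation assigns subsets of $X$ to variables; $x\models\lozenge\varphi$ iff there is $y$ with $xRy$ and $y\models\varphi$. A formula is valid in a frame if true at every point under every valuation. For a metric space $(X,d)$, $\mathrm{Log}_{>1}(X)$ is the set of modal formulas valid in the frame $(X,R_{>1})$, where $xR_{>1}y$ iff $d(x,y)>1$. $\mathbb{R}$ and $\mathbb{Q}$ carry the metric $d(x,y)=|x-y|$. *)

From Stdlib Require Import Reals.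
Open Scope R_scope.

Inductive form : Type :=
  | Var : nat -> form
  | Bot : form
  | Imp : form -> form -> form
  | Dia : form -> form.

Fixpoint sat {X : Type} (Rel : X -> X -> Prop) (V : nat -> X -> Prop)
  (x : X) (phi : form) : Prop :=
  match phi with
  | Var n => V n x
  | Bot => False
  | Imp a b => sat Rel V x a -> sat Rel V x b
  | Dia a => exists y, Rel x y /\ sat Rel V y a
  end.

Definition valid_in_frame {X : Type} (Rel : X -> X -> Prop) (phi : form) : Prop :=
  forall (V : nat -> X -> Prop) (x : X), sat Rel V x phi.

Definition R_gt1 {X : Type} (d : X -> X -> R) (x y : X) : Prop := d x y > 1.

Definition Log_gt1 {X : Type} (d : X -> X -> R) : form -> Prop :=
  fun phi => valid_in_frame (R_gt1 d) phi.

Definition dist_R (x y : R) : R := Rabs (x - y).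

(* The rationals, realised canonically as the subset of rational reals
   (each rational number is exactly one point), with the induced metric. *)
Definition is_rational (x : R) : Prop :=
  exists (p q : Z), q <> 0%Z /\ x = IZR p / IZR q.
Definition QR : Type := { x : R | is_rational x }.
Definition dist_Q (x y : QR) : R := Rabs (proj1_sig x - proj1_sig y).

(* Inclusion: if phi fails at x0 under V in (R, R_{>1}), pull V back along a map
   h : Q -> R that is strictly increasing and satisfies h (q + 1) = h q + 1; such an h
   preserves and reflects R_{>1}.  A back-and-forth construction on [0, 1] makes the image
   of h contain x0 and, for every subformula psi and every rational interval meeting the
   extension of psi, a point of that extension; this is exactly the back condition needed
   for h to preserve truth of subformulas of phi, so phi fails in Q as well.

   Strictness: with the universal modality Box Box (any two points have a common
   R_{>1}-successor) a formula can say that some maximal R_{>1}-independent set is covered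
   by two disjoint maximal independent sets meeting it.  In R these sets are the unit
   intervals [a, a + 1], which cannot be split this way; in Q the sets (r, r + 1) with r and
   r + 1 irrational are maximal independent, and (s + 1/2, s + 3/2) is split by (s, s + 1)
   and (s + 1, s + 2) for s = sqrt 2. *)

From Stdlib Require Import ZArith Reals Lra Lia List Classical ClassicalEpsilon.
From Stdlib Require Cantor.
Import ListNotations.
Open Scope R_scope.

Lemma rational_IZR (n : Z) : is_rational (IZR n).
Proof. exists n, 1%Z. split; [lia | unfold Rdiv; rewrite Rinv_1; ring]. Qed.

Lemma rational_add x y : is_rational x -> is_rational y -> is_rational (x + y).
Proof.
  intros [p [q [Hq ->]]] [p' [q' [Hq' ->]]].
  exists (p * q' + p' * q)%Z, (q * q')%Z. split; [lia |].
  rewrite plus_IZR, !mult_IZR. field. split; apply not_0_IZR; assumption.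
Qed.

Lemma rational_opp x : is_rational x -> is_rational (- x).
Proof.
  intros [p [q [Hq ->]]]. exists (- p)%Z, q. split; [assumption |].
  rewrite opp_IZR. unfold Rdiv. ring.
Qed.

Lemma rational_sub x y : is_rational x -> is_rational y -> is_rational (x - y).
Proof. intros Hx Hy. apply rational_add; [assumption | now apply rational_opp]. Qed.

Lemma irrational_add r q : ~ is_rational r -> is_rational q -> ~ is_rational (r + q).
Proof.
  intros Hr Hq Hrq. apply Hr. replace r with (r + q - q) by ring.
  now apply rational_sub.
Qed.

Lemma rational_between a b : a < b -> exists q, is_rational q /\ a < q < b.
Proof.
  intros Hab.
  set (n := up (/ (b - a))).
  destruct (archimed (/ (b - a))) as [Hn _].
  assert (Hinv : 0 < / (b - a)) by (apply Rinv_0_lt_compat; lra).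
  assert (Hn0 : 0 < IZR n) by (unfold n; lra).
  assert (Hgap : 1 < (b - a) * IZR n).
  { apply (Rmult_lt_reg_l (/ (b - a))); [assumption |].
    rewrite <- Rmult_assoc, Rinv_l by lra. fold n in Hn. lra. }
  set (k := up (a * IZR n)).
  destruct (archimed (a * IZR n)) as [Hk1 Hk2]. fold k in Hk1, Hk2.
  exists (IZR k / IZR n). split.
  - exists k, n. split; [intros E; rewrite E in Hn0; lra | reflexivity].
  - split; apply (Rmult_lt_reg_r (IZR n)); try assumption;
      unfold Rdiv; rewrite Rmult_assoc, Rinv_l by lra; lra.
Qed.

Lemma no_Z_sqrt2 (n : nat) (p q : Z) :
  (Z.abs_nat q < n)%nat -> q <> 0%Z -> (p * p <> 2 * q * q)%Z.
Proof.
  revert p q; induction n as [| n IH]; intros p q Hn Hq E; [lia |].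
  destruct (Z.Even_or_Odd p) as [[k ->] | [k ->]]; [| lia].
  destruct (Z.Even_or_Odd q) as [[m ->] | [m ->]]; [| lia].
  apply (IH k m); lia.
Qed.

Lemma sqrt2_irrational : ~ is_rational (sqrt 2).
Proof.
  intros [p [q [Hq E]]].
  assert (HqR : IZR q <> 0) by (apply not_0_IZR; assumption).
  assert (Hp : IZR p = sqrt 2 * IZR q) by (rewrite E; field; assumption).
  assert (E2 : IZR (p * p) = IZR (2 * q * q)).
  { rewrite !mult_IZR, Hp.
    replace (sqrt 2 * IZR q * (sqrt 2 * IZR q)) with (sqrt 2 * sqrt 2 * IZR q * IZR q) by ring.
    rewrite sqrt_sqrt by lra. reflexivity. }
  apply eq_IZR in E2. exact (no_Z_sqrt2 (S (Z.abs_nat q)) p q (Nat.lt_succ_diag_r _) Hq E2).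
Qed.

Definition rat_enum (n : nat) : R :=
  let (a, m) := Cantor.of_nat n in
  let (b, c) := Cantor.of_nat m in
  (INR a - INR b) / INR (S c).

Lemma rat_enum_onto x : is_rational x -> exists n, rat_enum n = x.
Proof.
  intros [p [q [Hq ->]]].
  assert (Hpos : exists p' q', (0 < q')%Z /\ IZR p / IZR q = IZR p' / IZR q')
    by (destruct (Z_lt_le_dec 0 q);
        [exists p, q; auto
        | exists (- p)%Z, (- q)%Z; split; [lia | rewrite !opp_IZR; field; apply not_0_IZR; lia]]).
  destruct Hpos as [p' [q' [Hq' ->]]].
  exists (Cantor.to_nat (Z.to_nat p', Cantor.to_nat (Z.to_nat (- p'), pred (Z.to_nat q')))).
  unfold rat_enum. rewrite !Cantor.cancel_of_to, !INR_IZR_INZ, <- minus_IZR.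
  f_equal; f_equal; lia.
Qed.

Lemma far_integer x y : exists k : Z, Rabs (x - IZR k) > 1 /\ Rabs (IZR k - y) > 1.
Proof.
  exists (up (Rabs x + Rabs y) + 1)%Z. rewrite plus_IZR.
  destruct (archimed (Rabs x + Rabs y)) as [Hup _].
  revert Hup. generalize (IZR (up (Rabs x + Rabs y))). intros u Hu.
  split_Rabs; split; lra.
Qed.

Definition Neg (a : form) : form := Imp a Bot.
Definition Box (a : form) : form := Neg (Dia (Neg a)).
Definition And (a b : form) : form := Neg (Imp a (Neg b)).
Definition Or (a b : form) : form := Imp (Neg a) b.
Definition Iff (a b : form) : form := And (Imp a b) (Imp b a).
Definition UBox (a : form) : form := Box (Box a).
Definition UDia (a : form) : form := Dia (Dia a).

Definition two_step_universal {X : Type} (Rel : X -> X -> Prop) : Prop :=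
  forall x y, exists z, Rel x z /\ Rel z y.

Section Semantics.

Variables (X : Type) (Rel : X -> X -> Prop) (V : nat -> X -> Prop).

Lemma sat_Box x a : sat Rel V x (Box a) <-> forall y, Rel x y -> sat Rel V y a.
Proof.
  cbn. split.
  - intros H y Hy. apply NNPP. intros Hn. apply H. now exists y.
  - intros H [y [Hy Hn]]. exact (Hn (H y Hy)).
Qed.

Lemma sat_Neg x a : sat Rel V x (Neg a) <-> ~ sat Rel V x a.
Proof. reflexivity. Qed.

Lemma sat_And x a b : sat Rel V x (And a b) <-> sat Rel V x a /\ sat Rel V x b.
Proof. cbn. tauto. Qed.

Lemma sat_Or x a b : sat Rel V x (Or a b) <-> sat Rel V x a \/ sat Rel V x b.
Proof. cbn. tauto. Qed.

Lemma sat_Iff x a b : sat Rel V x (Iff a b) <-> (sat Rel V x a <-> sat Rel V x b).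
Proof. cbn. tauto. Qed.

Hypothesis two_step : two_step_universal Rel.

Lemma sat_UBox x a : sat Rel V x (UBox a) <-> forall y, sat Rel V y a.
Proof.
  unfold UBox. rewrite sat_Box. split.
  - intros H y. destruct (two_step x y) as [z [Hxz Hzy]].
    exact (proj1 (sat_Box z a) (H z Hxz) y Hzy).
  - intros H z _. apply sat_Box. auto.
Qed.

Lemma sat_UDia x a : sat Rel V x (UDia a) <-> exists y, sat Rel V y a.
Proof.
  cbn. split.
  - intros [z [_ [y [_ Hy]]]]. now exists y.
  - intros [y Hy]. destruct (two_step x y) as [z [Hxz Hzy]]. eauto.
Qed.

End Semantics.

Lemma two_step_universal_R : two_step_universal (R_gt1 dist_R).
Proof.
  intros x y. destruct (far_integer x y) as [k Hk]. now exists (IZR k).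
Qed.

Lemma two_step_universal_Q : two_step_universal (R_gt1 dist_Q).
Proof.
  intros [x Hx] [y Hy]. destruct (far_integer x y) as [k Hk].
  now exists (exist _ (IZR k) (rational_IZR k)).
Qed.

Definition maximal_independent {X : Type} (Rel : X -> X -> Prop) (P : X -> Prop) : Prop :=
  forall x, P x <-> (forall y, Rel x y -> ~ P y).

Definition kernel_split {X : Type} (Rel : X -> X -> Prop) (L K M : X -> Prop) : Prop :=
  maximal_independent Rel L /\ maximal_independent Rel K /\ maximal_independent Rel M /\
  (forall x, ~ (L x /\ K x)) /\ (forall x, M x -> L x \/ K x) /\
  (exists x, M x /\ L x) /\ (exists x, M x /\ K x).

Definition kernel_formula (p : form) : form := UBox (Iff p (Box (Neg p))).

Definition split_formula : form :=
  let l := Var 0 in let k := Var 1 in let m := Var 2 in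
  Imp (kernel_formula l) (Imp (kernel_formula k) (Imp (kernel_formula m)
  (Imp (UBox (Neg (And l k))) (Imp (UBox (Imp m (Or l k)))
  (Imp (UDia (And m l)) (Imp (UDia (And m k)) Bot)))))).

Lemma sat_kernel_formula {X : Type} (Rel : X -> X -> Prop) V x n :
  two_step_universal Rel ->
  sat Rel V x (kernel_formula (Var n)) <-> maximal_independent Rel (V n).
Proof.
  intros Hts. unfold kernel_formula. rewrite sat_UBox by assumption.
  setoid_rewrite sat_Iff. setoid_rewrite sat_Box. reflexivity.
Qed.

Lemma sat_split_formula {X : Type} (Rel : X -> X -> Prop) V x :
  two_step_universal Rel ->
  sat Rel V x split_formula <-> ~ kernel_split Rel (V 0%nat) (V 1%nat) (V 2%nat).
Proof.
  intros Hts. unfold split_formula, kernel_split. cbn [sat].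
  rewrite !sat_kernel_formula, !sat_UBox, !sat_UDia by assumption.
  setoid_rewrite sat_Neg. setoid_rewrite sat_And. cbn [sat]. setoid_rewrite sat_Or. tauto.
Qed.

Lemma maximal_independent_close {X : Type} (d : X -> X -> R) P x y :
  maximal_independent (R_gt1 d) P -> P x -> P y -> d x y <= 1.
Proof.
  intros HP Hx Hy. apply Rnot_gt_le. intros Hxy. exact (proj1 (HP x) Hx y Hxy Hy).
Qed.

Lemma maximal_independent_R P :
  maximal_independent (R_gt1 dist_R) P -> exists a, forall y, P y <-> a <= y <= a + 1.
Proof.
  intros HP.
  assert (Hclose : forall y z, P y -> P z -> z <= y + 1).
  { intros y z Hy Hz. pose proof (maximal_independent_close _ _ _ _ HP Hy Hz).
    unfold dist_R in *. split_Rabs; lra. }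
  assert (Hne : exists x, P x).
  { apply NNPP. intros Hno. apply Hno. exists 0. apply HP. intros z _ Hz. eauto. }
  destruct Hne as [x Hx].
  destruct (completeness P) as [s [Hub Hlub]]; [exists (x + 1); intros z Hz; eauto | eauto |].
  assert (Hin : forall y, P y -> s - 1 <= y <= s).
  { intros y Hy. split; [| now apply Hub].
    enough (s <= y + 1) by lra. apply Hlub. intros z Hz. eauto. }
  exists (s - 1). intros y. split; [intros Hy; specialize (Hin y Hy); lra |].
  intros Hy. apply HP. intros z Hyz Hz. specialize (Hin z Hz).
  unfold R_gt1, dist_R in Hyz. split_Rabs; lra.
Qed.

Lemma unit_interval_not_split a b c x y :
  (forall z, ~ (a <= z <= a + 1 /\ b <= z <= b + 1)) ->
  (forall z, c <= z <= c + 1 -> a <= z <= a + 1 \/ b <= z <= b + 1) ->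
  c <= x <= c + 1 -> a <= x <= a + 1 -> c <= y <= c + 1 -> b <= y <= b + 1 -> False.
Proof.
  intros Hdisj Hcover Hx Hx' Hy Hy'.
  destruct (Rle_or_lt a b) as [Hab | Hab].
  - assert (Hgap : a + 1 < b) by (apply Rnot_le_lt; intros H; apply (Hdisj b); lra).
    destruct (Hcover ((a + 1 + b) / 2)); lra.
  - assert (Hgap : b + 1 < a) by (apply Rnot_le_lt; intros H; apply (Hdisj a); lra).
    destruct (Hcover ((b + 1 + a) / 2)); lra.
Qed.

Lemma no_kernel_split_R L K M : ~ kernel_split (R_gt1 dist_R) L K M.
Proof.
  intros [HL [HK [HM [Hdisj [Hcover [[x [HxM HxL]] [y [HyM HyK]]]]]]]].
  destruct (maximal_independent_R L HL) as [a Ha].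
  destruct (maximal_independent_R K HK) as [b Hb].
  destruct (maximal_independent_R M HM) as [c Hc].
  apply (unit_interval_not_split a b c x y).
  - intros z. rewrite <- Ha, <- Hb. apply Hdisj.
  - intros z. rewrite <- Ha, <- Hb, <- Hc. apply Hcover.
  - now apply Hc.
  - now apply Ha.
  - now apply Hc.
  - now apply Hb.
Qed.

Lemma split_formula_valid_R : Log_gt1 dist_R split_formula.
Proof.
  intros V x. apply sat_split_formula; [exact two_step_universal_R | apply no_kernel_split_R].
Qed.

Definition Q_interval (r : R) (q : QR) : Prop := r < proj1_sig q < r + 1.

Lemma maximal_independent_Q_interval r :
  ~ is_rational r -> ~ is_rational (r + 1) ->
  maximal_independent (R_gt1 dist_Q) (Q_interval r).
Proof.
  intros Hr Hr1 [q Hq]. unfold Q_interval, R_gt1, dist_Q; simpl. split.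
  - intros Hin [z Hz] Hqz Hzin; simpl in *. split_Rabs; lra.
  - intros Hout. apply NNPP. intros Hnot.
    assert (Hqr : q <> r) by (intros ->; contradiction).
    assert (Hqr1 : q <> r + 1) by (intros ->; contradiction).
    destruct (Rlt_or_le q r) as [Hlt | Hle].
    + destruct (rational_between (Rmax r (q + 1)) (r + 1)) as [t [Ht Htr]];
        [apply Rmax_lub_lt; lra |].
      pose proof (Rmax_l r (q + 1)). pose proof (Rmax_r r (q + 1)).
      apply (Hout (exist _ t Ht)); simpl; [split_Rabs |]; lra.
    + destruct (rational_between r (Rmin (r + 1) (q - 1))) as [t [Ht Htr]];
        [apply Rmin_glb_lt; lra |].
      pose proof (Rmin_l (r + 1) (q - 1)). pose proof (Rmin_r (r + 1) (q - 1)).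
      apply (Hout (exist _ t Ht)); simpl; [split_Rabs |]; lra.
Qed.

Lemma kernel_split_Q :
  kernel_split (R_gt1 dist_Q)
    (Q_interval (sqrt 2)) (Q_interval (sqrt 2 + 1)) (Q_interval (sqrt 2 + / 2)).
Proof.
  assert (Hirr : forall q, is_rational q -> ~ is_rational (sqrt 2 + q))
    by (intros q; apply irrational_add, sqrt2_irrational).
  assert (Hhalf : is_rational (/ 2)) by (exists 1%Z, 2%Z; split; [lia | simpl; field]).
  assert (H1 := rational_IZR 1). assert (H2 := rational_IZR 2).
  assert (H32 : is_rational (/ 2 + 1)) by (apply rational_add; assumption).
  unfold Q_interval. refine (conj _ (conj _ (conj _ (conj _ (conj _ (conj _ _)))))).
  - apply maximal_independent_Q_interval; [apply sqrt2_irrational |].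
    now apply Hirr.
  - apply maximal_independent_Q_interval; [now apply Hirr |].
    rewrite Rplus_assoc. replace (1 + 1) with 2 by ring. now apply Hirr.
  - apply maximal_independent_Q_interval; [now apply Hirr |].
    rewrite Rplus_assoc. now apply Hirr.
  - intros q. lra.
  - intros [q Hq]; simpl. intros Hm.
    assert (q <> sqrt 2 + 1) by (intros ->; exact (Hirr 1 H1 Hq)).
    destruct (Rlt_or_le q (sqrt 2 + 1)); [left | right]; lra.
  - destruct (rational_between (sqrt 2 + / 2) (sqrt 2 + 1)) as [t [Ht Htr]]; [lra |].
    exists (exist _ t Ht); simpl; lra.
  - destruct (rational_between (sqrt 2 + 1) (sqrt 2 + / 2 + 1)) as [t [Ht Htr]]; [lra |].
    exists (exist _ t Ht); simpl; lra.
Qed.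

Lemma split_formula_not_valid_Q : ~ Log_gt1 dist_Q split_formula.
Proof.
  intros Hvalid.
  set (V n := match n with
              | O => Q_interval (sqrt 2)
              | 1%nat => Q_interval (sqrt 2 + 1)
              | _ => Q_interval (sqrt 2 + / 2)
              end).
  set (q0 := exist is_rational 0 (rational_IZR 0)).
  exact (proj1 (sat_split_formula _ V q0 two_step_universal_Q) (Hvalid V q0) kernel_split_Q).
Qed.

Fixpoint subformulas (phi : form) : list form :=
  phi :: match phi with
         | Imp a b => subformulas a ++ subformulas b
         | Dia a => subformulas a
         | _ => []
         end.

Lemma in_subformulas_self phi : In phi (subformulas phi).
Proof. destruct phi; now left. Qed.

Section Transfer.

Variables (X Y : Type) (RX : X -> X -> Prop) (RY : Y -> Y -> Prop).
Variables (f : X -> Y) (V : nat -> Y -> Prop) (phi : form).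

Hypothesis forth : forall x x', RX x x' -> RY (f x) (f x').
Hypothesis back : forall psi x y, In psi (subformulas phi) ->
  RY (f x) y -> sat RY V y psi -> exists x', RX x x' /\ sat RY V (f x') psi.

Lemma sat_comap psi : incl (subformulas psi) (subformulas phi) ->
  forall x, sat RX (fun n x => V n (f x)) x psi <-> sat RY V (f x) psi.
Proof.
  induction psi as [n | | a IHa b IHb | a IHa]; intros Hsub x; cbn [sat]; try tauto.
  - rewrite IHa, IHb; [tauto | |];
      intros chi Hchi; apply Hsub; right; apply in_or_app; auto.
  - assert (Hsuba : incl (subformulas a) (subformulas phi))
      by (intros chi Hchi; apply Hsub; now right).
    split.
    + intros [x' [Hx' Hsat]]. exists (f x'). split; [now apply forth | now apply IHa].
    + intros [y [Hy Hsat]].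
      destruct (back a x y (Hsuba a (in_subformulas_self a)) Hy Hsat) as [x' [Hx' Hsat']].
      exists x'. split; [assumption | now apply IHa].
Qed.

Lemma valid_comap : valid_in_frame RX phi -> forall x, sat RY V (f x) phi.
Proof.
  intros Hvalid x. apply sat_comap; [apply incl_refl | apply Hvalid].
Qed.

End Transfer.

Definition order_iso_graph (L : list (R * R)) : Prop :=
  forall p p', In p L -> In p' L -> (fst p < fst p' <-> snd p < snd p').

Definition partial_iso (A B : R -> Prop) (L : list (R * R)) : Prop :=
  order_iso_graph L /\ In (0, 0) L /\ In (1, 1) L /\
  forall p, In p L -> A (fst p) /\ B (snd p).

Definition dense (B : R -> Prop) : Prop := forall u v, u < v -> exists y, B y /\ u < y < v.

Lemma dense_True : dense (fun _ => True).
Proof. intros u v Huv. exists ((u + v) / 2). split; [trivial | lra]. Qed.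

Lemma graph_gap (L : list (R * R)) x lo hi :
  lo < hi ->
  (forall p, In p L -> fst p < x -> snd p < hi) ->
  (forall p, In p L -> x < fst p -> lo < snd p) ->
  (forall p p', In p L -> In p' L -> fst p < x -> x < fst p' -> snd p < snd p') ->
  exists u v, lo <= u < v /\ v <= hi /\
    forall p, In p L -> (fst p < x -> snd p <= u) /\ (x < fst p -> v <= snd p).
Proof.
  revert lo hi. induction L as [| a L IH]; intros lo hi Hlh Hhi Hlo Hsep.
  { exists lo, hi. repeat split; lra || contradiction. }
  assert (Hhi' : forall p, In p L -> fst p < x -> snd p < hi) by auto with datatypes.
  assert (Hlo' : forall p, In p L -> x < fst p -> lo < snd p) by auto with datatypes.
  assert (Hsep' : forall p p', In p L -> In p' L -> fst p < x -> x < fst p' -> snd p < snd p')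
    by auto with datatypes.
  destruct (Rlt_dec (fst a) x) as [Hax | Hax]; [| destruct (Rlt_dec x (fst a)) as [Hxa | Hxa]].
  - destruct (IH (Rmax lo (snd a)) hi) as [u [v [Huv [Hv Hgap]]]]; auto with datatypes.
    + apply Rmax_lub_lt; auto with datatypes.
    + intros p Hp Hpx. apply Rmax_lub_lt; auto with datatypes.
    + pose proof (Rmax_l lo (snd a)). pose proof (Rmax_r lo (snd a)).
      exists u, v. split; [lra | split; [lra |]].
      intros p [<- | Hp]; [split; intros; lra | auto].
  - destruct (IH lo (Rmin hi (snd a))) as [u [v [Huv [Hv Hgap]]]]; auto with datatypes.
    + apply Rmin_glb_lt; auto with datatypes.
    + intros p Hp Hpx. apply Rmin_glb_lt; auto with datatypes.
    + pose proof (Rmin_l hi (snd a)). pose proof (Rmin_r hi (snd a)).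
      exists u, v. split; [lra | split; [lra |]].
      intros p [<- | Hp]; [split; intros; lra | auto].
  - destruct (IH lo hi) as [u [v [Huv [Hv Hgap]]]]; auto.
    exists u, v. split; [lra | split; [lra |]].
    intros p [<- | Hp]; [split; intros; lra | auto].
Qed.

Lemma order_iso_graph_cons L x y : order_iso_graph L ->
  (forall p, In p L -> (fst p < x <-> snd p < y) /\ (x < fst p <-> y < snd p)) ->
  order_iso_graph ((x, y) :: L).
Proof.
  intros Hiso Hnew p p' [<- | Hp] [<- | Hp']; simpl.
  - split; intros; lra.
  - apply Hnew; assumption.
  - apply Hnew; assumption.
  - apply Hiso; assumption.
Qed.

Lemma partial_iso_forth A B L x : dense B -> partial_iso A B L -> A x -> 0 < x < 1 ->
  (forall p, In p L -> fst p <> x) -> exists y, partial_iso A B ((x, y) :: L).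
Proof.
  intros HB [Hiso [H00 [H11 HAB]]] HAx Hx Hnew.
  destruct (graph_gap L x 0 1) as [u [v [Hu [Hv Hgap]]]].
  - lra.
  - intros p Hp Hpx. apply (Hiso p (1, 1)); simpl; auto; lra.
  - intros p Hp Hpx. apply (Hiso (0, 0) p); simpl; auto; lra.
  - intros p p' Hp Hp' Hpx Hp'x. apply Hiso; auto; lra.
  - destruct (HB u v) as [y [HBy Hy]]; [lra |].
    exists y. refine (conj _ (conj (or_intror H00) (conj (or_intror H11) _))).
    + apply order_iso_graph_cons; [assumption |].
      intros p Hp. specialize (Hnew p Hp). destruct (Hgap p Hp) as [Hleft Hright].
      destruct (Rtotal_order (fst p) x) as [Hpx | [Hpx | Hpx]]; [| contradiction |].
      * specialize (Hleft Hpx). split; split; intros; lra.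
      * specialize (Hright Hpx). split; split; intros; lra.
    + intros p [<- | Hp]; [split; assumption | now apply HAB].
Qed.

Definition transpose (L : list (R * R)) : list (R * R) := map (fun p => (snd p, fst p)) L.

Lemma in_transpose p L : In p (transpose L) <-> In (snd p, fst p) L.
Proof.
  unfold transpose. rewrite in_map_iff. split.
  - intros [[a b] [<- Hab]]. exact Hab.
  - intros Hp. exists (snd p, fst p). destruct p. split; [reflexivity | assumption].
Qed.

Lemma partial_iso_transpose A B L : partial_iso A B L -> partial_iso B A (transpose L).
Proof.
  intros [Hiso [H00 [H11 HAB]]].
  refine (conj _ (conj _ (conj _ _))); try (apply in_transpose; assumption).
  - intros p p' Hp Hp'. rewrite in_transpose in Hp, Hp'. symmetry. exact (Hiso _ _ Hp Hp').
  - intros p Hp. rewrite in_transpose in Hp. apply and_comm, (HAB _ Hp).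
Qed.

Lemma transpose_involutive L : transpose (transpose L) = L.
Proof.
  unfold transpose. rewrite map_map. rewrite <- (map_id L) at 2.
  apply map_ext. intros []. reflexivity.
Qed.

Lemma partial_iso_dom_covers A B L x : dense B -> partial_iso A B L -> A x -> 0 <= x <= 1 ->
  exists y, In (x, y) L \/ partial_iso A B ((x, y) :: L).
Proof.
  intros HB HL HAx Hx01.
  destruct (classic (exists y, In (x, y) L)) as [[y Hy] | Hnew]; [now exists y; left |].
  pose proof HL as [_ [H00 [H11 _]]].
  assert (Hx : 0 < x < 1)
    by (split; apply Rnot_le_lt; intros Hb; apply Hnew;
        [exists 0; replace x with 0 by lra | exists 1; replace x with 1 by lra]; assumption).
  destruct (partial_iso_forth A B L x HB HL HAx Hx) as [y Hy]; [| now exists y; right].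
  intros [a b] Hab Ha. apply Hnew. exists b. simpl in Ha. now subst.
Qed.

Lemma partial_iso_rng_covers A B L y : dense A -> partial_iso A B L -> B y -> 0 <= y <= 1 ->
  exists x, In (x, y) L \/ partial_iso A B ((x, y) :: L).
Proof.
  intros HA HL HBy Hy01.
  destruct (partial_iso_dom_covers B A (transpose L) y HA (partial_iso_transpose _ _ _ HL) HBy Hy01)
    as [x [Hx | Hx]]; exists x.
  - left. exact (proj1 (in_transpose (y, x) L) Hx).
  - right. rewrite <- (transpose_involutive L).
    exact (partial_iso_transpose _ _ ((y, x) :: transpose L) Hx).
Qed.

Definition rat_iso : list (R * R) -> Prop := partial_iso is_rational (fun _ => True).

Definition extend (K : R * R -> Prop) (L : list (R * R)) : list (R * R) :=
  if excluded_middle_informative (exists p, K p /\ rat_iso (p :: L))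
  then epsilon (inhabits (0, 0)) (fun p => K p /\ rat_iso (p :: L)) :: L
  else L.

Lemma extend_rat_iso K L : rat_iso L -> rat_iso (extend K L).
Proof.
  intros HL. unfold extend. destruct excluded_middle_informative as [Hex | _]; [| assumption].
  exact (proj2 (epsilon_spec _ _ Hex)).
Qed.

Lemma extend_incl K L : incl L (extend K L).
Proof.
  unfold extend. destruct excluded_middle_informative; [apply incl_tl |]; apply incl_refl.
Qed.

Lemma extend_covers K L :
  (exists p, K p /\ (In p L \/ rat_iso (p :: L))) -> exists p, K p /\ In p (extend K L).
Proof.
  intros [p [Kp Hp]]. unfold extend.
  destruct excluded_middle_informative as [Hex | Hnone].
  - exists (epsilon (inhabits (0, 0)) (fun p => K p /\ rat_iso (p :: L))).
    split; [exact (proj1 (epsilon_spec _ _ Hex)) | now left].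
  - destruct Hp as [Hp | Hp]; [now exists p | exfalso; eauto].
Qed.

Fixpoint chain (c : nat -> R) (n : nat) : list (R * R) :=
  match n with
  | O => [(0, 0); (1, 1)]
  | S k => extend (fun p => snd p = c k) (extend (fun p => fst p = rat_enum k) (chain c k))
  end.

Lemma chain_rat_iso c n : rat_iso (chain c n).
Proof.
  induction n as [| n IH]; simpl; [| now apply extend_rat_iso, extend_rat_iso].
  refine (conj _ (conj (or_introl eq_refl) (conj (or_intror (or_introl eq_refl)) _))).
  - intros p p' [<- | [<- | []]] [<- | [<- | []]]; simpl; split; intros; lra.
  - intros p [<- | [<- | []]]; split; trivial; apply rational_IZR.
Qed.

Lemma chain_incl c n m : (n <= m)%nat -> incl (chain c n) (chain c m).
Proof.
  induction 1 as [| m _ IH]; [apply incl_refl |].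
  eapply incl_tran; [exact IH |]. simpl.
  eapply incl_tran; [apply extend_incl | apply extend_incl].
Qed.

Definition in_chain (c : nat -> R) (p : R * R) : Prop := exists n, In p (chain c n).

Lemma in_chain_order_iso c p p' : in_chain c p -> in_chain c p' ->
  (fst p < fst p' <-> snd p < snd p').
Proof.
  intros [n Hn] [m Hm]. destruct (chain_rat_iso c (max n m)) as [Hiso _].
  apply Hiso; [apply (chain_incl c n) | apply (chain_incl c m)]; auto; lia.
Qed.

Lemma in_chain_rational c p : in_chain c p -> is_rational (fst p).
Proof. intros [n Hn]. exact (proj1 (proj2 (proj2 (proj2 (chain_rat_iso c n))) p Hn)). Qed.

Lemma in_chain_dom c x : is_rational x -> 0 <= x <= 1 -> exists y, in_chain c (x, y).
Proof.
  intros Hx Hx01. destruct (rat_enum_onto x Hx) as [k <-].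
  destruct (partial_iso_dom_covers _ _ _ _ dense_True (chain_rat_iso c k) Hx Hx01) as [y Hy].
  destruct (extend_covers (fun p => fst p = rat_enum k) (chain c k)) as [[a b] [Ha Hab]];
    [now exists (rat_enum k, y) |].
  simpl in Ha. subst a. exists b, (S k). simpl. now apply extend_incl.
Qed.

Lemma in_chain_rng c k : 0 <= c k <= 1 -> exists x, in_chain c (x, c k).
Proof.
  intros Hck.
  set (L := extend (fun p => fst p = rat_enum k) (chain c k)).
  pose proof (extend_rat_iso (fun p => fst p = rat_enum k) _ (chain_rat_iso c k)) as HL.
  destruct (partial_iso_rng_covers _ _ L (c k) rational_between HL I Hck) as [x Hx].
  destruct (extend_covers (fun p => snd p = c k) L) as [[a b] [Hb Hab]];
    [now exists (x, c k) |].
  simpl in Hb. subst b. now exists a, (S k).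
Qed.

Lemma unit_embedding (c : nat -> R) : exists g : R -> R,
  (forall q q', is_rational q -> is_rational q' -> 0 <= q < 1 -> 0 <= q' < 1 ->
     q < q' -> g q < g q') /\
  (forall q, is_rational q -> 0 <= q < 1 -> 0 <= g q < 1) /\
  (forall k, 0 <= c k < 1 -> exists q, is_rational q /\ 0 <= q < 1 /\ g q = c k).
Proof.
  set (g q := epsilon (inhabits 0) (fun y => in_chain c (q, y))).
  assert (Hg : forall q, is_rational q -> 0 <= q <= 1 -> in_chain c (q, g q))
    by (intros q Hq Hq01; apply epsilon_spec, in_chain_dom; assumption).
  assert (H00 : in_chain c (0, 0)) by (exists O; now left).
  assert (H11 : in_chain c (1, 1)) by (exists O; right; now left).
  pose proof (in_chain_order_iso c) as Hiso.
  exists g. split; [| split].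
  - intros q q' Hq Hq' Hq01 Hq'01 Hlt.
    exact (proj1 (Hiso _ _ (Hg q Hq ltac:(lra)) (Hg q' Hq' ltac:(lra))) Hlt).
  - intros q Hq Hq01. pose proof (Hg q Hq ltac:(lra)) as Hgq. split.
    + apply Rnot_lt_le. intros Hneg. apply (Hiso _ _ Hgq H00) in Hneg. simpl in Hneg. lra.
    + exact (proj1 (Hiso _ _ Hgq H11) (proj2 Hq01)).
  - intros k Hk. destruct (in_chain_rng c k ltac:(lra)) as [x Hx].
    assert (Hx01 : 0 <= x < 1).
    { split.
      - apply Rnot_lt_le. intros Hneg. apply (Hiso _ _ Hx H00) in Hneg. simpl in Hneg. lra.
      - exact (proj2 (Hiso _ _ Hx H11) (proj2 Hk)). }
    pose proof (in_chain_rational c _ Hx) as Hxr. simpl in Hxr.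
    pose proof (Hg x Hxr ltac:(lra)) as Hgx.
    exists x. split; [assumption | split; [assumption |]].
    apply Rle_antisym; apply Rnot_lt_le; intros Hlt;
      [apply (Hiso _ _ Hx Hgx) in Hlt | apply (Hiso _ _ Hgx Hx) in Hlt]; simpl in Hlt; lra.
Qed.

Definition periodic_ext (g : R -> R) (x : R) : R := IZR (Int_part x) + g (x - IZR (Int_part x)).

Lemma Int_part_spec x : IZR (Int_part x) <= x < IZR (Int_part x) + 1.
Proof. destruct (base_Int_part x). lra. Qed.

Lemma Int_part_unique n x : IZR n <= x < IZR n + 1 -> Int_part x = n.
Proof.
  intros Hx. unfold Int_part. rewrite <- (tech_up x (n + 1)); rewrite ?plus_IZR; lia || lra.
Qed.

Lemma periodic_ext_decomp g n t : 0 <= t < 1 -> periodic_ext g (IZR n + t) = IZR n + g t.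
Proof.
  intros Ht. unfold periodic_ext. rewrite (Int_part_unique n) by lra.
  do 2 f_equal. ring.
Qed.

Lemma periodic_ext_shift g x : periodic_ext g (x + 1) = periodic_ext g x + 1.
Proof.
  pose proof (Int_part_spec x) as Hx. set (n := Int_part x) in *.
  replace (x + 1) with (IZR (n + 1) + (x - IZR n)) by (rewrite plus_IZR; ring).
  rewrite periodic_ext_decomp by lra. unfold periodic_ext. fold n. rewrite plus_IZR. ring.
Qed.

Definition increasing_on_Q (h : R -> R) : Prop :=
  forall q q', is_rational q -> is_rational q' -> q < q' -> h q < h q'.

Lemma periodic_ext_increasing g :
  (forall q q', is_rational q -> is_rational q' -> 0 <= q < 1 -> 0 <= q' < 1 ->
     q < q' -> g q < g q') ->
  (forall q, is_rational q -> 0 <= q < 1 -> 0 <= g q < 1) ->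
  increasing_on_Q (periodic_ext g).
Proof.
  intros Hmono Hrange q q' Hq Hq' Hlt.
  pose proof (Int_part_spec q) as Hn. pose proof (Int_part_spec q') as Hn'.
  unfold periodic_ext. set (n := Int_part q) in *. set (n' := Int_part q') in *.
  assert (Ht : is_rational (q - IZR n)) by (apply rational_sub, rational_IZR; assumption).
  assert (Ht' : is_rational (q' - IZR n')) by (apply rational_sub, rational_IZR; assumption).
  pose proof (Hrange _ Ht ltac:(lra)). pose proof (Hrange _ Ht' ltac:(lra)).
  destruct (Z.lt_trichotomy n n') as [Hnn | [<- | Hnn]].
  - apply Z.le_succ_l, IZR_le in Hnn. rewrite succ_IZR in Hnn. lra.
  - apply Rplus_lt_compat_l, Hmono; auto; lra.
  - apply Z.le_succ_l, IZR_le in Hnn. rewrite succ_IZR in Hnn. lra.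
Qed.

Lemma periodic_embedding (T : nat -> R) : exists h : R -> R,
  increasing_on_Q h /\ (forall x, h (x + 1) = h x + 1) /\
  (forall n, exists q, is_rational q /\ h q = T n).
Proof.
  set (c n := T n - IZR (Int_part (T n))).
  destruct (unit_embedding c) as [g [Hmono [Hrange Honto]]].
  exists (periodic_ext g). split; [now apply periodic_ext_increasing |].
  split; [apply periodic_ext_shift |].
  intros n. pose proof (Int_part_spec (T n)) as HT.
  destruct (Honto n) as [q [Hq [Hq01 Hgq]]]; [unfold c; lra |].
  exists (IZR (Int_part (T n)) + q).
  split; [apply rational_add; [apply rational_IZR | assumption] |].
  rewrite periodic_ext_decomp, Hgq by assumption. unfold c. ring.
Qed.

Lemma increasing_on_Q_iff h q q' : increasing_on_Q h -> is_rational q -> is_rational q' ->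
  (q < q' <-> h q < h q').
Proof.
  intros Hh Hq Hq'. split; [now apply Hh |]. intros Hlt.
  destruct (Rtotal_order q q') as [| [<- | Hgt]]; [assumption | lra |].
  pose proof (Hh _ _ Hq' Hq Hgt). lra.
Qed.

Lemma increasing_on_Q_dist h q q' : increasing_on_Q h -> (forall x, h (x + 1) = h x + 1) ->
  is_rational q -> is_rational q' -> (Rabs (q - q') > 1 <-> Rabs (h q - h q') > 1).
Proof.
  intros Hh Hshift Hq Hq'.
  assert (Hfar : forall a b, is_rational a -> is_rational b -> (a + 1 < b <-> h a + 1 < h b)).
  { intros a b Ha Hb. rewrite <- Hshift.
    apply increasing_on_Q_iff; [| apply rational_add; [| apply (rational_IZR 1)] |]; assumption. }
  assert (Habs : forall a b, Rabs (a - b) > 1 <-> a + 1 < b \/ b + 1 < a)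
    by (intros a b; split; intros H; split_Rabs; try destruct H;
        lra || (left; lra) || (right; lra)).
  rewrite !Habs, (Hfar q q'), (Hfar q' q) by assumption. reflexivity.
Qed.

Lemma rational_neighbourhood a y : Rabs (a - y) > 1 ->
  exists t1 t2, is_rational t1 /\ is_rational t2 /\ t1 < y < t2 /\
    forall z, t1 < z < t2 -> Rabs (a - z) > 1.
Proof.
  intros Hay. set (e := Rabs (a - y) - 1).
  destruct (rational_between (y - e) y) as [t1 [Ht1 Hy1]]; [unfold e; lra |].
  destruct (rational_between y (y + e)) as [t2 [Ht2 Hy2]]; [unfold e; lra |].
  exists t1, t2. repeat split; try assumption; try lra.
  intros z Hz. unfold e in *. split_Rabs; lra.
Qed.

Definition witness_seq (P : nat -> R -> Prop) (x0 : R) (n : nat) : R :=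
  match Cantor.of_nat n with
  | (O, _) => x0
  | (S k, j) =>
      let (m1, m2) := Cantor.of_nat j in
      epsilon (inhabits 0) (fun y => P k y /\ rat_enum m1 < y < rat_enum m2)
  end.

Lemma witness_seq_start P x0 : witness_seq P x0 (Cantor.to_nat (0, 0)%nat) = x0.
Proof. unfold witness_seq. now rewrite Cantor.cancel_of_to. Qed.

Lemma witness_seq_spec P x0 k t1 t2 y : is_rational t1 -> is_rational t2 ->
  P k y -> t1 < y < t2 ->
  exists n, P k (witness_seq P x0 n) /\ t1 < witness_seq P x0 n < t2.
Proof.
  intros Ht1 Ht2 Hy Hyt.
  destruct (rat_enum_onto t1 Ht1) as [m1 <-], (rat_enum_onto t2 Ht2) as [m2 <-].
  exists (Cantor.to_nat (S k, Cantor.to_nat (m1, m2))).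
  unfold witness_seq. rewrite !Cantor.cancel_of_to.
  apply (epsilon_spec (inhabits 0) (fun y => P k y /\ _ < y < _)). eauto.
Qed.

Lemma Log_gt1_Q_incl_R phi : Log_gt1 dist_Q phi -> Log_gt1 dist_R phi.
Proof.
  intros HQ V x0.
  set (P k y := sat (R_gt1 dist_R) V y (nth k (subformulas phi) Bot)).
  set (T := witness_seq P x0).
  destruct (periodic_embedding T) as [h [Hh [Hshift Honto]]].
  set (f (q : QR) := h (proj1_sig q)).
  assert (Hdist : forall q q' : QR, R_gt1 dist_Q q q' <-> R_gt1 dist_R (f q) (f q')).
  { intros [q Hq] [q' Hq']. apply increasing_on_Q_dist; assumption. }
  destruct (Honto (Cantor.to_nat (0, 0)%nat)) as [q0 [Hq0 Hx0]].
  unfold T in Hx0. rewrite witness_seq_start in Hx0.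
  rewrite <- Hx0. change (h q0) with (f (exist _ q0 Hq0)).
  apply (valid_comap _ _ (R_gt1 dist_Q) (R_gt1 dist_R) f V phi); [now apply Hdist | | apply HQ].
  intros psi [q Hq] y Hpsi Hqy Hy.
  destruct (In_nth _ _ Bot Hpsi) as [k [_ Hk]].
  destruct (rational_neighbourhood (h q) y Hqy) as [t1 [t2 [Ht1 [Ht2 [Hyt Hfar]]]]].
  destruct (witness_seq_spec P x0 k t1 t2 y Ht1 Ht2) as [n [HPn Hn]];
    [unfold P; now rewrite Hk | assumption |].
  destruct (Honto n) as [q' [Hq' Hq'n]].
  exists (exist _ q' Hq'). split.
  - apply Hdist. unfold R_gt1, dist_R, f; simpl. rewrite Hq'n. now apply Hfar.
  - unfold f; simpl. rewrite Hq'n. unfold P in HPn. now rewrite Hk in HPn.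
Qed.

Theorem theorem4p8 :
  (forall phi : form, Log_gt1 dist_Q phi -> Log_gt1 dist_R phi) /\
  (exists phi : form, Log_gt1 dist_R phi /\ ~ Log_gt1 dist_Q phi).
Proof.
  split.
  - exact Log_gt1_Q_incl_R.
  - exists split_formula. exact (conj split_formula_valid_R split_formula_not_valid_Q).
Qed.
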